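(* Let $A_i\in\mathbb{R}^{n\times n}$, $i\ge -1$, be entrywise nonnegative matrices such that $A=\sum_{i=-1}^{\infty}A_i$ is irreducible and row stochastic. Assume that $\sum_{i=-1}^\infty iA_i$ converges and $\eta=\mathbf v^T\mathbf w<0$, where $\mathbf v>0$ satisfies $\mathbf v^TA=\mathbf v^T$, $\mathbf v^T\mathbf e=1$, and $\mathbf w=\sum_{i=-1}^\infty iA_i\mathbf e$. Let $G$ be the componentwise minimal nonnegative solution of $X=\sum_{i=-1}^{\infty}A_iX^{i+1}$. Set $X_0=0$ and, for a sequence of reals $\{\omega_k\}_{k\ge1}$, define for $k\ge0$ \[ (I_n-A_0)Y_k=A_{-1}+\sum_{i=1}^{\infty}A_iX_k^{i+1},\qquad X_{k+1}=Y_k+\omega_{k+1}(I_n-A_0)^{-1}A_1\,(Y_k^2-X_k^2). \] If $\{\omega_k\}_{k\ge1}$ is eligible, then $\{X_k\}_{k\in\mathbb N}$ converges monotonically to $G$.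
   Context: $\mathbf e$ is the all-ones vector; inequalities between matrices/vectors are entrywise. The sequence $\{\omega_k\}_{k\ge1}$ is called eligible (for the iteration above) if $\omega_k\ge 0$ for all $k\ge1$ and, for all $k\ge 0$, with $X_k,Y_k,X_{k+1}$ generated by the iteration, \[ \omega_{k+1}A_1(Y_k^2-X_k^2)\le A_1(X_{k+1}^2-X_k^2)+\sum_{i=2}^{\infty}A_i(Y_k^{i+1}-X_k^{i+1}) \] and \[ X_{k+1}\mathbf e=Y_k\mathbf e+\omega_{k+1}(I_n-A_0)^{-1}A_1(Y_k^2-X_k^2)\mathbf e\le \mathbf e . \] *)

From HB Require Import structures.
From mathcomp Require Import all_boot all_order all_algebra.
From mathcomp Require Import all_classical all_reals all_analysis.
Set Implicit Arguments. Unset Strict Implicit. Unset Printing Implicit Defensive.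
Import Order.TTheory GRing.Theory Num.Theory.
Import numFieldNormedType.Exports.
Local Open Scope classical_set_scope.
Local Open Scope ring_scope.

Section Defs.
Context {R : realType}.

Definition mxle {p q : nat} (A B : 'M[R]_(p, q)) : Prop :=
  forall i j, A i j <= B i j.

Definition mx_series_cvg {p q : nat} (F : nat -> 'M[R]_(p, q)) (S : 'M[R]_(p, q)) : Prop :=
  forall i j, series (fun k => F k i j) @ \oo --> S i j.

Definition mx_series_sum {p q : nat} (F : nat -> 'M[R]_(p, q)) : 'M[R]_(p, q) :=
  \matrix_(i, j) limn (series (fun k => F k i j)).

Definition ones (n : nat) : 'cV[R]_n := const_mx 1.

(* irreducibility of a square matrix: there is no nonempty proper subset S of
   indices with A i j = 0 for all i in S, j not in S (i.e. A is not
   permutation-similar to a block triangular matrix) *)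
Definition irreducible_mx {n : nat} (A : 'M[R]_n) : Prop :=
  forall S : {set 'I_n}, S != finset.set0 -> S != [set: 'I_n]%SET ->
    exists i j, [/\ i \in S, j \notin S & A i j != 0].

Definition row_stochastic {n : nat} (A : 'M[R]_n) : Prop :=
  mxle 0 A /\ A *m ones n = ones n.

(* Index shift: Aext Am1 A k = A_{k-1}, where Am1 = A_{-1} and A i = A_i (i >= 0) *)
Definition Aext {n : nat} (Am1 : 'M[R]_n) (A : nat -> 'M[R]_n) (k : nat) : 'M[R]_n :=
  if k is k'.+1 then A k' else Am1.

Section Iteration.
Variables (n : nat) (Am1 : 'M[R]_n) (A : nat -> 'M[R]_n) (omega : nat -> R).

Definition invIA0 : 'M[R]_n := invmx (1%:M - A 0%N).

Definition Ystep (X : 'M[R]_n) : 'M[R]_n :=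
  invIA0 *m (Am1 + mx_series_sum (fun k => A k.+1 *m X ^+ k.+2)).

Definition Xnext (k : nat) (X : 'M[R]_n) : 'M[R]_n :=
  Ystep X + omega k.+1 *: (invIA0 *m A 1%N *m (Ystep X ^+ 2 - X ^+ 2)).

Fixpoint Xseq (k : nat) : 'M[R]_n :=
  if k is k'.+1 then Xnext k' (Xseq k') else 0.

Definition Yseq (k : nat) : 'M[R]_n := Ystep (Xseq k).

Definition eligible : Prop :=
  (forall k, (1 <= k)%N -> 0 <= omega k) /\
  forall k : nat,
    mxle (omega k.+1 *: (A 1%N *m (Yseq k ^+ 2 - Xseq k ^+ 2)))
         (A 1%N *m (Xseq k.+1 ^+ 2 - Xseq k ^+ 2)
          + mx_series_sum (fun m => A m.+2 *m (Yseq k ^+ m.+3 - Xseq k ^+ m.+3)))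
    /\ Xseq k.+1 *m ones n
         = Yseq k *m ones n
           + omega k.+1 *: (invIA0 *m A 1%N *m (Yseq k ^+ 2 - Xseq k ^+ 2) *m ones n)
    /\ mxle (Xseq k.+1 *m ones n) (ones n).

End Iteration.
End Defs.

From HB Require Import structures.
From mathcomp Require Import all_boot all_order all_algebra.
From mathcomp Require Import all_classical all_reals all_analysis.
From mathcomp Require Import ring lra.
Import Order.TTheory GRing.Theory Num.Theory.
Import numFieldNormedType.Exports.
Local Open Scope classical_set_scope.
Local Open Scope ring_scope.

(* (I - A_0)^-1 is entrywise nonnegative: A_0 <= A, and A_0 <> A since otherwise
   the drift would vanish, so the minimum principle for the irreducible
   stochastic matrix A makes I - A_0 a nonsingular M-matrix.  By induction
   X_k <= Y_k <= X_(k+1) with every X_k substochastic, eligibility being exactly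
   what keeps (I - A_0) (Y_(k+1) - X_(k+1)) nonnegative.  The monotone, bounded
   limit solves X = sum_i A_i X^(i+1), hence dominates G by minimality, and has
   row sums at most 1.  Since the drift eta is negative, G is stochastic: if
   c >= 0 solves the Poisson equation (I - A) c = w - eta e, the vectors
   e - G^l e - eps (l e + c) are nonpositive by a maximum principle over the
   levels l, and eps -> 0 gives G e >= e. *)

Section RealSeries.
Context {R : realType}.
Implicit Types u v : nat -> R.

Definition sums u (s : R) := series u @ \oo --> s.

Lemma sums_lim {u s} : sums u s -> limn (series u) = s.
Proof. exact: cvg_lim. Qed.

Lemma eq_sums {u v s} : u =1 v -> sums u s -> sums v s.
Proof. by move=> /funext ->. Qed.

Lemma sums0 : sums (fun=> 0) 0.
Proof.
rewrite /sums (_ : series _ = fun=> 0); first exact: cvg_cst.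
by apply/funext => N; rewrite /series /= big1.
Qed.

Lemma sumsD {u v} {s t : R} : sums u s -> sums v t -> sums (fun k => u k + v k) (s + t).
Proof.
move=> Hu Hv; rewrite /sums (_ : series _ = series u + series v); first exact: cvgD.
by apply/funext => N; rewrite /series /= big_split.
Qed.

Lemma sumsN {u s} : sums u s -> sums (fun k => - u k) (- s).
Proof.
move=> Hu; rewrite /sums (_ : series _ = - series u); first exact: cvgN.
by apply/funext => N; rewrite /series /= sumrN.
Qed.

Lemma sumsZ a {u s} : sums u s -> sums (fun k => a * u k) (a * s).
Proof.
move=> Hu; rewrite /sums (_ : series _ = fun N => a * series u N).
  exact: cvgMl_tmp.
by apply/funext => N; rewrite /series /= mulr_sumr.
Qed.

Lemma cvg_sum {I : Type} {r : seq I} {P : pred I} {U : I -> nat -> R} {s : I -> R} :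
  (forall i, U i @ \oo --> s i) ->
  (fun k => \sum_(i <- r | P i) U i k) @ \oo --> \sum_(i <- r | P i) s i.
Proof.
by move=> H; apply: (@cvg_big _ _ +%R 0 P _ nat) => //; exact: add_continuous.
Qed.

Lemma sums_sum {I : Type} {r : seq I} {P : pred I} {U : I -> nat -> R} {s : I -> R} :
  (forall i, sums (U i) (s i)) ->
  sums (fun k => \sum_(i <- r | P i) U i k) (\sum_(i <- r | P i) s i).
Proof.
move=> H; rewrite /sums (_ : series _ = fun N => \sum_(i <- r | P i) series (U i) N).
  exact: cvg_sum.
by apply/funext => N; rewrite /series /= exchange_big.
Qed.

Lemma ler_sums {u v} {s t : R} : (forall k, u k <= v k) -> sums u s -> sums v t -> s <= t.
Proof.
move=> le_uv Hu Hv; apply: (ler_cvg_to Hu Hv); apply: nearW => N.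
by apply: ler_sum => k _.
Qed.

Lemma sums_behead {u s} : sums u s -> sums (fun k => u k.+1) (s - u 0%N).
Proof.
move=> Hu; rewrite /sums (_ : series _ = fun N => series u N.+1 - u 0%N).
  by apply: cvgB; [rewrite (cvg_shiftS (series u)) | exact: cvg_cst].
by apply/funext => N; rewrite /series /= big_nat_recl // addrC addKr.
Qed.

Lemma sums_cons {u} {t : R} : sums (fun k => u k.+1) t -> sums u (u 0%N + t).
Proof.
move=> Hu; rewrite /sums -(cvg_shiftS (series u)).
rewrite (_ : [sequence _]_n = fun N => u 0%N + series (fun k => u k.+1) N).
  by apply: cvgD => //; exact: cvg_cst.
by apply/funext => N; rewrite /series /= big_nat_recl.
Qed.

Lemma sums_dominated {u v} {t : R} : (forall k, 0 <= u k) -> (forall k, u k <= v k) ->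
  sums v t -> sums u (limn (series u)).
Proof.
move=> u0 le_uv Hv; apply: (series_le_cvg (u_ := u) (v_ := v)) => // [k|].
  exact: le_trans (le_uv k).
exact: cvgP Hv.
Qed.

Lemma series_le_sums {u s} : (forall k, 0 <= u k) -> sums u s -> forall N, series u N <= s.
Proof.
move=> u0 Hu N; rewrite -(sums_lim Hu).
apply: nondecreasing_cvgn_le; last exact: cvgP Hu.
by apply: nondecreasing_series => k _.
Qed.

Lemma term2_le_sums {u s} {a b : nat} : (forall k, 0 <= u k) -> sums u s ->
  a != b -> u a + u b <= s.
Proof.
move=> u0 Hu ab; apply: le_trans (series_le_sums u0 Hu (maxn a b).+1).
rewrite /series /= big_mkord.
have ha : (a < (maxn a b).+1)%N by rewrite ltnS leq_maxl.
have hb : (b < (maxn a b).+1)%N by rewrite ltnS leq_maxr.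
rewrite (bigD1 (Ordinal ha)) //= lerD2l.
rewrite (bigD1 (Ordinal hb)) /=; last by rewrite -val_eqE /= eq_sym.
by rewrite lerDl; apply: sumr_ge0.
Qed.

Lemma term_le_sums {u s} : (forall k, 0 <= u k) -> sums u s -> forall k, u k <= s.
Proof.
move=> u0 Hu k; have kSk : k != k.+1 by rewrite neq_ltn ltnSn.
by apply: le_trans (term2_le_sums u0 Hu kSk); rewrite lerDl.
Qed.

End RealSeries.

Lemma exists_argmin {R : realType} {I : finType} (i0 : I) (F : I -> R) :
  exists i, forall j, F i <= F j.
Proof. by case: (@arg_minP _ _ I i0 xpredT F isT) => i _ H; exists i => j; apply: H. Qed.

Section MatrixOrder.
Context {R : realType}.

Lemma mxle0P {p q} {X : 'M[R]_(p, q)} : mxle 0 X <-> forall i j, 0 <= X i j.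
Proof. by split => H i j; move: (H i j); rewrite mxE. Qed.

Section Rect.
Context {p q r : nat}.
Implicit Types X Y Z : 'M[R]_(p, q).

Lemma mxlexx X : mxle X X.
Proof. by move=> i j. Qed.

Lemma mxle_trans {X Y Z} : mxle X Y -> mxle Y Z -> mxle X Z.
Proof. by move=> XY YZ i j; exact: le_trans (XY i j) (YZ i j). Qed.

Lemma mxleD {X Y X' Y'} : mxle X Y -> mxle X' Y' -> mxle (X + X') (Y + Y').
Proof. by move=> XY XY' i j; rewrite !mxE; apply: lerD. Qed.

Lemma mxsubr_ge0 {X Y} : mxle 0 (Y - X) <-> mxle X Y.
Proof. by split=> H i j; move: (H i j); rewrite !mxE subr_ge0. Qed.

Lemma mxscale_ge0 {a X} : 0 <= a -> mxle 0 X -> mxle 0 (a *: X).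
Proof. by move=> a0 /mxle0P X0; apply/mxle0P => i j; rewrite !mxE mulr_ge0. Qed.

Lemma mulmx_ge0 {A : 'M[R]_(r, p)} {X} : mxle 0 A -> mxle 0 X -> mxle 0 (A *m X).
Proof.
move=> /mxle0P A0 /mxle0P X0; apply/mxle0P => i j; rewrite mxE.
by apply: sumr_ge0 => l _; apply: mulr_ge0.
Qed.

Lemma mxle_wpM2l {A : 'M[R]_(r, p)} {X Y} : mxle 0 A -> mxle X Y -> mxle (A *m X) (A *m Y).
Proof.
move=> /mxle0P A0 XY i j; rewrite !mxE; apply: ler_sum => l _.
exact: ler_wpM2l.
Qed.

Lemma mxle_wpM2r {C : 'M[R]_(q, r)} {X Y} : mxle 0 C -> mxle X Y -> mxle (X *m C) (Y *m C).
Proof.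
move=> /mxle0P C0 XY i j; rewrite !mxE; apply: ler_sum => l _.
exact: ler_wpM2r.
Qed.

End Rect.

Lemma mxle_pM {p q r} {A B : 'M[R]_(p, q)} {C D : 'M[R]_(q, r)} :
  mxle 0 A -> mxle 0 C -> mxle A B -> mxle C D -> mxle (A *m C) (B *m D).
Proof.
move=> A0 C0 AB CD; apply: mxle_trans (mxle_wpM2l A0 CD) _.
by apply: mxle_wpM2r AB; exact: mxle_trans C0 CD.
Qed.

Lemma exprmx_ge0 {n} {X : 'M[R]_n} m : mxle 0 X -> mxle 0 (X ^+ m).
Proof.
move=> X0; elim: m => [|m IH].
  by apply/mxle0P => i j; rewrite expr0 mxE; case: (i == j).
by rewrite exprS; apply: mulmx_ge0.
Qed.

Lemma mxle_exprn {n} {X Y : 'M[R]_n} m : mxle 0 X -> mxle X Y -> mxle (X ^+ m) (Y ^+ m).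
Proof.
move=> X0 XY; elim: m => [|m IH]; first exact: mxlexx.
by rewrite !exprS; apply: mxle_pM => //; apply: exprmx_ge0.
Qed.

Lemma ones_ge0 {n} : mxle 0 (ones n : 'cV[R]_n).
Proof. by apply/mxle0P => i j; rewrite mxE. Qed.

Lemma mulmx_col_le {p n} {B : 'M[R]_(p, n)} {x : 'cV[R]_n} {h : R} i :
  mxle 0 B -> (forall j, x j 0 <= h) -> (B *m x) i 0 <= h * (B *m ones n) i 0.
Proof.
move=> /mxle0P B0 xh; rewrite !mxE mulr_sumr; apply: ler_sum => j _.
by rewrite mxE mulr1 [h * _]mulrC; apply: ler_wpM2l.
Qed.

Lemma mulmx_ones_entry {p q} (X : 'M[R]_(p, q)) i j : (X *m ones q) i j = \sum_l X i l.
Proof. by rewrite mxE; apply: eq_bigr => l _; rewrite mxE mulr1. Qed.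

Lemma mxle_rowsum_eq {p q} {X Y : 'M[R]_(p, q)} :
  mxle X Y -> (forall i, (Y *m ones q) i 0 <= (X *m ones q) i 0) -> X = Y.
Proof.
move=> XY rs; apply/matrixP => i j; apply/eqP; rewrite eq_sym -subr_eq0; apply/eqP.
have d0 l : 0 <= Y i l - X i l by rewrite subr_ge0; apply: XY.
have : \sum_l (Y i l - X i l) = 0.
  apply/eqP; rewrite eq_le sumr_ge0 // andbT sumrB subr_le0.
  by have := rs i; rewrite !mulmx_ones_entry.
by move/psumr_eq0P; apply.
Qed.

Section Series.
Context {p q : nat}.
Implicit Types F G : nat -> 'M[R]_(p, q).

Lemma mx_series_sumE {F S} : mx_series_cvg F S -> mx_series_sum F = S.
Proof. by move=> H; apply/matrixP => i j; rewrite mxE; apply: sums_lim; apply: H. Qed.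

Lemma eq_mx_series_cvg {F G S} : F =1 G -> mx_series_cvg F S -> mx_series_cvg G S.
Proof. by move=> /funext ->. Qed.

Lemma mx_series_cvgD {F G S T} : mx_series_cvg F S -> mx_series_cvg G T ->
  mx_series_cvg (fun k => F k + G k) (S + T).
Proof.
move=> HF HG i j; rewrite mxE.
by apply: eq_sums (sumsD (HF i j) (HG i j)) => k; rewrite mxE.
Qed.

Lemma mx_series_cvgN {F S} : mx_series_cvg F S -> mx_series_cvg (fun k => - F k) (- S).
Proof.
move=> HF i j; rewrite mxE.
by apply: eq_sums (sumsN (HF i j)) => k; rewrite mxE.
Qed.

Lemma mx_series_cvgB {F G S T} : mx_series_cvg F S -> mx_series_cvg G T ->
  mx_series_cvg (fun k => F k - G k) (S - T).
Proof. by move=> HF HG; apply: mx_series_cvgD HF (mx_series_cvgN HG). Qed.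

Lemma mx_series_cvgZ a {F S} : mx_series_cvg F S -> mx_series_cvg (fun k => a *: F k) (a *: S).
Proof.
move=> HF i j; rewrite mxE.
by apply: eq_sums (sumsZ a (HF i j)) => k; rewrite mxE.
Qed.

Lemma mx_series_cvgMr {r} (C : 'M[R]_(q, r)) {F S} : mx_series_cvg F S ->
  mx_series_cvg (fun k => F k *m C) (S *m C).
Proof.
move=> HF i j; rewrite mxE.
rewrite (eq_bigr (fun l => C l j * S i l)) => [|l _]; last exact: mulrC.
apply: eq_sums (sums_sum (fun l => sumsZ (C l j) (HF i l))) => k.
by rewrite mxE; apply: eq_bigr => l _; rewrite mulrC.
Qed.

Lemma mx_series_cvg_behead {F S} : mx_series_cvg F S ->
  mx_series_cvg (fun k => F k.+1) (S - F 0%N).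
Proof. by move=> HF i j; rewrite !mxE; exact: sums_behead (HF i j). Qed.

Lemma mx_series_cvg_cons {F T} : mx_series_cvg (fun k => F k.+1) T ->
  mx_series_cvg F (F 0%N + T).
Proof. by move=> HF i j; rewrite !mxE; exact: sums_cons (HF i j). Qed.

Lemma mxle_series {F G S T} : (forall k, mxle (F k) (G k)) ->
  mx_series_cvg F S -> mx_series_cvg G T -> mxle S T.
Proof. by move=> FG HF HG i j; apply: ler_sums (HF i j) (HG i j) => k; apply: FG. Qed.

Lemma mx_series_dominated {F G T} : (forall k, mxle 0 (F k)) ->
  (forall k, mxle (F k) (G k)) -> mx_series_cvg G T ->
  mx_series_cvg F (mx_series_sum F).
Proof.
move=> F0 FG HG i j; rewrite mxE.
apply: (sums_dominated (v := fun k => G k i j) (t := T i j)) => [k|k|]; last exact: HG.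
  by move/mxle0P: (F0 k); apply.
exact: FG.
Qed.

Lemma mx_series_term_le {F S} : (forall k, mxle 0 (F k)) -> mx_series_cvg F S ->
  forall k, mxle (F k) S.
Proof.
move=> F0 HF k i j; apply: (term_le_sums (u := fun k => F k i j)) => [l|]; last exact: HF.
by move/mxle0P: (F0 l); apply.
Qed.

Lemma mx_series_ge0 {F S} : (forall k, mxle 0 (F k)) -> mx_series_cvg F S -> mxle 0 S.
Proof. by move=> F0 HF; apply: mxle_trans (F0 0%N) (mx_series_term_le F0 HF 0%N). Qed.

End Series.

Definition mxcvg {p q} (P : nat -> 'M[R]_(p, q)) (L : 'M[R]_(p, q)) :=
  forall i j, (fun k => P k i j) @ \oo --> L i j.

Lemma mxcvg_cst {p q} (L : 'M[R]_(p, q)) : mxcvg (fun=> L) L.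
Proof. by move=> i j; exact: cvg_cst. Qed.

Lemma mxcvgD {p q} {P Q : nat -> 'M[R]_(p, q)} {L M} :
  mxcvg P L -> mxcvg Q M -> mxcvg (fun k => P k + Q k) (L + M).
Proof.
move=> HP HQ i j; rewrite mxE.
by under eq_cvg do rewrite mxE; exact: cvgD.
Qed.

Lemma mxcvgN {p q} {P : nat -> 'M[R]_(p, q)} {L} : mxcvg P L -> mxcvg (fun k => - P k) (- L).
Proof.
move=> HP i j; rewrite mxE.
by under eq_cvg do rewrite mxE; exact: cvgN.
Qed.

Lemma mxcvgM {p q r} {P : nat -> 'M[R]_(p, q)} {Q : nat -> 'M[R]_(q, r)} {L M} :
  mxcvg P L -> mxcvg Q M -> mxcvg (fun k => P k *m Q k) (L *m M).
Proof.
move=> HP HQ i j; rewrite mxE.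
under eq_cvg do rewrite mxE.
by apply: cvg_sum => l; exact: cvgM (HP i l) (HQ l j).
Qed.

Lemma mxcvgX {n} {P : nat -> 'M[R]_n} {L} m : mxcvg P L -> mxcvg (fun k => P k ^+ m) (L ^+ m).
Proof.
move=> HP; elim: m => [|m IH]; first exact: mxcvg_cst.
by rewrite exprS; under [fun k => _]funext do rewrite exprS; exact: mxcvgM.
Qed.

End MatrixOrder.

Section Substochastic.
Context {R : realType} {n : nat}.
Implicit Types X Y : 'M[R]_n.

Definition substochastic X := mxle 0 X /\ mxle (X *m ones n) (ones n).

Lemma substochastic0 : substochastic 0.
Proof. by split; [apply: mxlexx | rewrite mul0mx; apply: ones_ge0]. Qed.

Lemma substochastic_le1 {X} : substochastic X -> mxle X (const_mx 1).
Proof.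
case=> /mxle0P X0 Xe i j; rewrite mxE.
have := Xe i 0; rewrite !mxE => h; apply: le_trans h.
rewrite (bigD1 j) //= mxE mulr1 lerDl; apply: sumr_ge0 => l _.
by rewrite mxE mulr1.
Qed.

Lemma substochasticX {X} m : substochastic X -> substochastic (X ^+ m).
Proof.
move=> [X0 Xe]; split; first exact: exprmx_ge0.
elim: m => [|m IH]; first by rewrite expr0 mul1mx; apply: mxlexx.
by rewrite exprS -mulmxE -mulmxA; apply: mxle_trans Xe; apply: mxle_wpM2l.
Qed.

Lemma substochastic_le {X Y} : mxle 0 X -> mxle X Y -> substochastic Y -> substochastic X.
Proof.
move=> X0 XY [Y0 Ye]; split => //; apply: mxle_trans Ye.
by apply: mxle_wpM2r => //; apply: ones_ge0.
Qed.

End Substochastic.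

Section IrreducibleStochastic.
Context {R : realType} {n : nat} {P : 'M[R]_n}.
Hypothesis P_irr : irreducible_mx P.
Hypothesis P_sto : row_stochastic P.

Local Notation e := (ones n).

Lemma stochastic_row_sum i : \sum_l P i l = 1.
Proof.
case: P_sto => _ /matrixP /(_ i 0); rewrite !mxE => <-.
by apply: eq_bigr => l _; rewrite mxE mulr1.
Qed.

(* Row i of x = B x + y reads m = B (x - m) + m (B e) + y with every term
   of B (x - m) and y nonnegative and m < 0, which forces B e = 1 and
   B (x - m) = 0 on that row. *)
Lemma min_row_full {B : 'M[R]_n} {x y : 'cV[R]_n} {m : R} {i : 'I_n} :
  mxle 0 B -> mxle B P -> mxle 0 y -> x = B *m x + y ->
  m < 0 -> (forall l, m <= x l 0) -> x i 0 = m ->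
  (forall l, B i l = P i l) /\ (forall l, P i l != 0 -> x l 0 = m).
Proof.
move=> /mxle0P B0 BP /mxle0P y0 Ex m0 xm xim.
have E1 : x i 0 = \sum_l B i l * x l 0 + y i 0 by rewrite {1}Ex !mxE.
have E2 : \sum_l B i l * x l 0 = \sum_l B i l * (x l 0 - m) + m * \sum_l B i l.
  by rewrite mulr_sumr -big_split /=; apply: eq_bigr => l _; ring.
have sB : \sum_l B i l <= 1.
  by rewrite -(stochastic_row_sum i); apply: ler_sum => l _; apply: BP.
have T0 l : 0 <= B i l * (x l 0 - m) by apply: mulr_ge0; rewrite ?subr_ge0.
have S0 : 0 <= \sum_l B i l * (x l 0 - m) by apply: sumr_ge0.
have ineq : \sum_l B i l * (x l 0 - m) + m * \sum_l B i l <= m.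
  by rewrite -E2 -xim E1 lerDl.
have sB1 : \sum_l B i l = 1.
  apply/eqP; rewrite eq_le sB /=.
  have : m * \sum_l B i l <= m by apply: le_trans ineq; rewrite lerDr.
  by rewrite -{2}(mulr1 m) ler_nM2l.
have sT0 : \sum_l B i l * (x l 0 - m) = 0.
  by apply/eqP; rewrite eq_le S0 andbT; move: ineq; rewrite sB1 mulr1 gerDr.
have BPi l : B i l = P i l.
  have : \sum_l (P i l - B i l) = 0 by rewrite sumrB stochastic_row_sum sB1 subrr.
  move/psumr_eq0P => H; apply/eqP; rewrite eq_sym -subr_eq0; apply/eqP.
  by apply: H => // k _; rewrite subr_ge0; apply: BP.
split=> // l Pl; apply/eqP.
have := @psumr_eq0P _ _ _ _ (fun k _ => T0 k) sT0 l isT.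
by move/eqP; rewrite mulf_eq0 BPi (negbTE Pl) /= subr_eq0.
Qed.

Lemma stochastic_min_principle {B : 'M[R]_n} {x y : 'cV[R]_n} {i0 : 'I_n} :
  mxle 0 B -> mxle B P -> mxle 0 y -> x = B *m x + y -> x i0 0 < 0 ->
  (forall i j, B i j = P i j) /\ (forall i, x i 0 = x i0 0).
Proof.
move=> B0 BP y0 Ex xi0.
have [i1 xm] := exists_argmin i0 (fun i => x i 0).
have m0 : x i1 0 < 0 by apply: le_lt_trans (xm i0) xi0.
pose S := [set i | x i 0 == x i1 0]%SET.
have minrow i : i \in S ->
    (forall l, B i l = P i l) /\ (forall l, P i l != 0 -> x l 0 = x i1 0).
  by rewrite inE => /eqP; apply: min_row_full.
have inS i : i \in S.
  suff -> : S = [set: 'I_n]%SET by rewrite inE.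
  apply/eqP; apply: contraT => Sn.
  have S1 : S != finset.set0 by apply/finset.set0Pn; exists i1; rewrite inE.
  have [k [l [kS lS Pkl]]] := P_irr S S1 Sn.
  by move: lS; rewrite inE ((minrow k kS).2 l Pkl) eqxx.
split=> [i j|i]; first exact: (minrow i (inS i)).1.
by move: (inS i) (inS i0); rewrite !inE => /eqP -> /eqP ->.
Qed.

Section StrictlySubstochastic.
Context {B : 'M[R]_n}.
Hypotheses (B_ge0 : mxle 0 B) (B_le : mxle B P).
Hypothesis B_neq : exists i j, B i j != P i j.

Lemma mxge0_1B {p} {X : 'M[R]_(n, p)} : mxle 0 ((1 - B) *m X) -> mxle 0 X.
Proof.
move=> /mxle0P H; apply/mxle0P => i j; rewrite leNgt; apply/negP => Xneg.
pose x := \col_k X k j.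
pose y := \col_k ((1 - B) *m X) k j.
have Ex : x = B *m x + y.
  apply/matrixP => k l; rewrite /y mulmxBl mul1mx !mxE.
  by under eq_bigr do rewrite mxE; rewrite addrC subrK.
have y0 : mxle 0 y by apply/mxle0P => k l; rewrite mxE; apply: H.
have xi : x i 0 < 0 by rewrite mxE.
have [BP _] := stochastic_min_principle B_ge0 B_le y0 Ex xi.
by case: B_neq => a [b /eqP]; apply; exact: BP.
Qed.

Lemma unitmx_1B : (1 - B) \in unitmx.
Proof.
rewrite unitmxE unitfE -det_tr; apply/negP => /det0P [u u0 uE].
have Hu : (1 - B) *m u^T = 0 by apply: trmx_inj; rewrite trmx_mul trmxK uE trmx0.
have P1 : mxle 0 u^T by apply: mxge0_1B; rewrite Hu; apply: mxlexx.
have P2 : mxle 0 (- u^T) by apply: mxge0_1B; rewrite mulmxN Hu oppr0; apply: mxlexx.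
move/eqP: u0; apply; apply/matrixP => i j.
move: (P1 j i) (P2 j i); rewrite !mxE => a b; apply/eqP; rewrite eq_le.
by rewrite -oppr_ge0 b a.
Qed.

Lemma invmx_1B_ge0 {p} {Y : 'M[R]_(n, p)} : mxle 0 Y -> mxle 0 (invmx (1 - B) *m Y).
Proof. by move=> Y0; apply: mxge0_1B; rewrite mulmxA mulmxV ?mul1mx // unitmx_1B. Qed.

End StrictlySubstochastic.

Section Poisson.
Context {v : 'rV[R]_n}.
Hypotheses (vP : v *m P = v) (ve : (v *m e) 0 0 = 1).

Lemma mulmx_const_col {x : 'cV[R]_n} {a} : (forall i, x i 0 = a) -> (v *m x) 0 0 = a.
Proof.
move=> xa; move: ve; rewrite !mxE => v1.
rewrite -[RHS]mulr1 -v1 mulr_sumr; apply: eq_bigr => j _.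
by rewrite xa !mxE mulr1 mulrC.
Qed.

Lemma harmonic_eq0 {x : 'cV[R]_n} : x = P *m x -> (v *m x) 0 0 = 0 -> x = 0.
Proof.
have P0 : mxle 0 P by case: P_sto.
have harmonic_ge0 (z : 'cV[R]_n) : z = P *m z -> (v *m z) 0 0 = 0 -> forall i, 0 <= z i 0.
  move=> Ez vz i; rewrite leNgt; apply/negP => zi.
  have Ez' : z = P *m z + 0 by rewrite addr0.
  have [_ zc] := stochastic_min_principle P0 (mxlexx P) (mxlexx 0) Ez' zi.
  by move: zi; rewrite -(mulmx_const_col zc) vz ltxx.
move=> Ex vx; apply/matrixP => i j; rewrite (ord1 j) mxE; apply/eqP.
rewrite eq_le harmonic_ge0 // andbT.
have vNx : (v *m - x) 0 0 = 0 by rewrite mulmxN mxE vx oppr0.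
have ENx : - x = P *m - x by rewrite mulmxN -Ex.
by have := harmonic_ge0 _ ENx vNx i; rewrite mxE oppr_ge0.
Qed.

Lemma ve_scalar : v *m e = 1%:M.
Proof. by apply/matrixP => i j; rewrite (ord1 i) (ord1 j) ve mxE. Qed.

(* Its inverse is the Kemeny--Snell fundamental matrix. *)
Definition poisson_mx := 1%:M - P + e *m v.

Lemma v_poisson_mx : v *m poisson_mx = v.
Proof.
rewrite /poisson_mx !mulmxDr mulmxN mulmx1 vP mulmxA ve_scalar mul1mx.
by rewrite subrr add0r.
Qed.

Lemma unitmx_poisson_mx : poisson_mx \in unitmx.
Proof.
rewrite unitmxE unitfE -det_tr; apply/negP => /det0P [u u0 uE].
have Zu : poisson_mx *m u^T = 0.
  by apply: trmx_inj; rewrite trmx_mul trmxK uE trmx0.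
have vu : v *m u^T = 0 by rewrite -v_poisson_mx -mulmxA Zu mulmx0.
have Pu : u^T = P *m u^T.
  move: Zu; rewrite /poisson_mx !mulmxDl mulNmx mul1mx -mulmxA vu mulmx0 addr0.
  by move/eqP; rewrite subr_eq0 => /eqP.
have := harmonic_eq0 Pu; rewrite vu mxE => /(_ erefl) uT0.
by move/eqP: u0; apply; rewrite -[u]trmxK uT0 trmx0.
Qed.

Lemma poisson_solution_ge0 (w : 'cV[R]_n) :
  exists c : 'cV[R]_n, mxle 0 c /\ P *m c + w = c + (v *m w) 0 0 *: e.
Proof.
set eta := (v *m w) 0 0.
pose c0 := invmx poisson_mx *m (w - eta *: e).
have Zc : poisson_mx *m c0 = w - eta *: e.
  by rewrite mulmxA mulmxV ?mul1mx // unitmx_poisson_mx.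
have vc : v *m c0 = 0.
  have : v *m c0 = v *m (w - eta *: e) by rewrite -Zc mulmxA v_poisson_mx.
  rewrite mulmxBr -scalemxAr ve_scalar => ->.
  apply/matrixP => i j; rewrite (ord1 i) (ord1 j) !mxE /= mulr1.
  by rewrite /eta mxE subrr.
have Pc0 : P *m c0 + w = c0 + eta *: e.
  move: Zc; rewrite /poisson_mx !mulmxDl mulNmx mul1mx -mulmxA vc mulmx0 addr0.
  by move=> Zc; rewrite -[w](subrK (eta *: e)) -Zc addrA [P *m c0 + _]addrC subrK.
clearbody c0.
(* c0 + K e is again a solution since P e = e; K makes it nonnegative. *)
pose K := \sum_i `|c0 i 0|.
exists (c0 + K *: e); split.
  apply/mxle0P => i j; rewrite (ord1 j) !mxE mulr1.
  have : `|c0 i 0| <= K by rewrite /K (bigD1 i) //= lerDl; apply: sumr_ge0.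
  by have := ler_norm (- c0 i 0); rewrite normrN; lra.
case: P_sto => _ Pe.
by rewrite mulmxDr -scalemxAr Pe [LHS]addrAC Pc0 [RHS]addrAC.
Qed.

End Poisson.
End IrreducibleStochastic.

Section Drift.
Context {R : realType} {n : nat} {Am1 : 'M[R]_n} {A : nat -> 'M[R]_n}.
Context {Asum M1 : 'M[R]_n} {v : 'rV[R]_n}.
Hypothesis A_ge0 : forall k, mxle 0 (Aext Am1 A k).
Hypothesis A_sum : mx_series_cvg (Aext Am1 A) Asum.
Hypothesis M1_sum : mx_series_cvg (fun k => ((k%:Z - 1)%:~R : R) *: Aext Am1 A k) M1.
Hypothesis drift_lt0 : (v *m (M1 *m ones n)) 0 0 < 0.
Hypotheses (A_irr : irreducible_mx Asum) (A_sto : row_stochastic Asum).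

Local Notation Ax := (Aext Am1 A).
Local Notation e := (ones n).
Local Notation eta := ((v *m (M1 *m ones n)) 0 0).

Lemma A0_le_sum : mxle (A 0%N) Asum.
Proof. exact: (mx_series_term_le A_ge0 A_sum 1%N). Qed.

(* Otherwise A_i = 0 for every i <> 0, hence M1 = 0, contradicting eta < 0. *)
Lemma A0_neq_sum : exists i j, A 0%N i j != Asum i j.
Proof.
apply/not_existsP => A0_eq.
have {}A0_eq i j : A 0%N i j = Asum i j.
  by apply/eqP; apply/negPn/negP => /eqP ?; apply: (A0_eq i); exists j; apply/eqP.
have A_eq0 k i j : (k != 1)%N -> Ax k i j = 0.
  move=> k1; have Ax0 l : 0 <= Ax l i j by move/mxle0P: (A_ge0 l); apply.
  have := term2_le_sums Ax0 (A_sum i j) k1; rewrite /= A0_eq gerDr => le0.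
  by apply/eqP; rewrite eq_le le0 Ax0.
have M1_0 : M1 = 0.
  apply/matrixP => i j; rewrite mxE -(sums_lim (M1_sum i j)).
  apply: sums_lim; apply: eq_sums sums0 => k; rewrite mxE.
  by case: (eqVneq k 1%N) => [->|k1]; rewrite ?subrr ?mul0r // A_eq0 ?mulr0.
by move: drift_lt0; rewrite M1_0 mul0mx mulmx0 mxE ltxx.
Qed.

Lemma sum_ones : Asum *m e = e.
Proof. by case: A_sto. Qed.

Section StochasticMinimalSolution.
Context {c : 'cV[R]_n} {G : 'M[R]_n}.
Hypotheses (c_ge0 : mxle 0 c) (c_poisson : Asum *m c + M1 *m e = c + eta *: e).
Hypotheses (G_ge0 : mxle 0 G) (G_sol : mx_series_cvg (fun k => Ax k *m G ^+ k) G).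

Definition defect (l : nat) : 'cV[R]_n := e - G ^+ l *m e.
Definition lyapunov (l : nat) : 'cV[R]_n := l%:R *: e + c.
Definition probe (eps : R) (l : nat) : 'cV[R]_n := defect l - eps *: lyapunov l.

Lemma series_defect m : mx_series_cvg (fun k => Ax k *m defect (m + k)) (defect m.+1).
Proof.
have := mx_series_cvgB (mx_series_cvgMr e A_sum) (mx_series_cvgMr (G ^+ m *m e) G_sol).
rewrite sum_ones mulmxA mulmxE -exprS; apply: eq_mx_series_cvg => k.
by rewrite /defect mulmxBr addnC exprD -mulmxE !mulmxA.
Qed.

Lemma series_lyapunov m :
  mx_series_cvg (fun k => Ax k *m lyapunov (m + k)) (lyapunov m.+1 + eta *: e).
Proof.
have := mx_series_cvgD (mx_series_cvgD (mx_series_cvgZ (m.+1)%:R (mx_series_cvgMr e A_sum))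
  (mx_series_cvgMr e M1_sum)) (mx_series_cvgMr c A_sum).
have -> : (m.+1)%:R *: (Asum *m e) + M1 *m e + Asum *m c = lyapunov m.+1 + eta *: e.
  by rewrite /lyapunov sum_ones -!addrA -c_poisson [M1 *m e + _]addrC.
apply: eq_mx_series_cvg => k.
rewrite /lyapunov mulmxDr -scalemxAr -scalemxAl -scalerDl.
by congr (_ *: _ + _); rewrite intrB natrD /=; ring.
Qed.

Lemma series_probe eps m :
  mx_series_cvg (fun k => Ax k *m probe eps (m + k)) (probe eps m.+1 - (eps * eta) *: e).
Proof.
have := mx_series_cvgB (series_defect m) (mx_series_cvgZ eps (series_lyapunov m)).
rewrite /probe scalerDr scalerA opprD addrA.
by apply: eq_mx_series_cvg => k; rewrite /defect !mulmxBr scalemxAr.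
Qed.

Lemma probe_le {eps} l i : 0 < eps -> probe eps l i 0 <= 1 - eps * l%:R.
Proof.
move=> eps0; have := c_ge0 i 0; rewrite !mxE mulr1 => ci.
have : 0 <= (G ^+ l *m e) i 0.
  by move/mxle0P: (mulmx_ge0 (exprmx_ge0 l G_ge0) ones_ge0); apply.
by rewrite /probe /defect /lyapunov !mxE; move: (\sum_j _) => g; nra.
Qed.

Lemma probe0_le0 {eps} i : 0 < eps -> probe eps 0 i 0 <= 0.
Proof.
move=> eps0; have := c_ge0 i 0; rewrite /probe /defect /lyapunov expr0 mul1mx subrr.
by rewrite !mxE => ci; nra.
Qed.

(* At a maximum of level m.+1, series_probe writes the maximal value as an
   average of values at most itself, plus eps * eta < 0. *)
Lemma probe_not_max_at_succ {eps m i} : 0 < eps ->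
  ~ (forall l j, probe eps l j 0 <= probe eps m.+1 i 0).
Proof.
move=> eps0 Hmax; set H := probe eps m.+1 i 0 in Hmax.
have Hk k : (Ax k *m probe eps (m + k)) i 0 <= H * (Ax k *m e) i 0.
  exact: mulmx_col_le (A_ge0 k) (Hmax _).
have eps_eta : eps * eta < 0 by rewrite pmulr_rlt0.
have := ler_sums Hk (series_probe eps m i 0) (sumsZ H (mx_series_cvgMr e A_sum i 0)).
rewrite sum_ones /H; move: (probe eps m.+1) (eps * eta) eps_eta => p s s0.
by rewrite !mxE; lra.
Qed.

Lemma probe_eventually_le0 {eps} : 0 < eps ->
  exists L, forall l i, (L <= l)%N -> probe eps l i 0 <= 0.
Proof.
move=> eps0; pose L := Num.Def.archi_bound (1 / eps).
have : 1 / eps < L%:R by apply: archi_boundP; rewrite divr_ge0 // ltW.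
rewrite ltr_pdivrMr // => HL; exists L => l i Ll.
have := probe_le l i eps0; have : L%:R <= l%:R :> R by rewrite ler_nat.
nra.
Qed.

(* The positive part of probe lives on finitely many levels, so it has a
   maximum there, which probe_not_max_at_succ and probe0_le0 rule out. *)
Lemma probe_le0 {eps} l i : 0 < eps -> probe eps l i 0 <= 0.
Proof.
move=> eps0; rewrite leNgt; apply/negP => hpos.
have [L HL] := probe_eventually_le0 eps0.
have lL : (l < L)%N by rewrite ltnNge; apply/negP => /(HL l i); rewrite leNgt hpos.
have [[[ls lsL] js] Hmin] :=
  exists_argmin (Ordinal lL, i) (fun q : 'I_L * 'I_n => - probe eps q.1 q.2 0).
have Hmax l' j : probe eps l' j 0 <= probe eps ls js 0.
  case: (ltnP l' L) => [lt|ge]; first by have := Hmin (Ordinal lt, j); rewrite lerN2.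
  apply: le_trans (HL l' j ge) (le_trans (ltW hpos) _).
  by have := Hmin (Ordinal lL, i); rewrite lerN2.
case: ls lsL Hmin Hmax => [|m] _ _ Hmax.
  by have := probe0_le0 js eps0; have := Hmax l i; lra.
exact: probe_not_max_at_succ eps0 Hmax.
Qed.

Lemma rowsum_G_ge1 i : 1 <= (G *m e) i 0.
Proof.
rewrite leNgt; apply/negP => lt1.
set d := 1 - (G *m e) i 0.
have d0 : 0 < d by rewrite subr_gt0.
have := c_ge0 i 0; rewrite mxE => ci.
set C := 1 + c i 0.
have C0 : 0 < C by rewrite /C; lra.
have eps0 : 0 < d / (2 * C) by rewrite divr_gt0 // mulr_gt0.
have := probe_le0 1 i eps0.
have -> : probe (d / (2 * C)) 1 i 0 = d - d / (2 * C) * C.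
  by rewrite /probe /defect /lyapunov expr1 /d /C !mxE /=; ring.
have -> : d / (2 * C) * C = d / 2 by field; rewrite lt0r_neq0.
lra.
Qed.

End StochasticMinimalSolution.

Definition phi (Z : 'M[R]_n) := mx_series_sum (fun k => A k.+1 *m Z ^+ k.+2).
Definition psi (Z : 'M[R]_n) := mx_series_sum (fun k => A k.+2 *m Z ^+ k.+3).

Section SubstochasticArgument.
Context {Z : 'M[R]_n}.
Hypothesis Z_sub : substochastic Z.

Lemma series_AZ_cvg :
  mx_series_cvg (fun k => Ax k *m Z ^+ k) (mx_series_sum (fun k => Ax k *m Z ^+ k)).
Proof.
apply: (mx_series_dominated (G := fun k => Ax k *m const_mx 1)).
- by move=> k; apply: mulmx_ge0 => //; case: (substochasticX k Z_sub).
- by move=> k; apply: mxle_wpM2l => //; apply/substochastic_le1/substochasticX.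
- exact: mx_series_cvgMr A_sum.
Qed.

Lemma phi_cvg : mx_series_cvg (fun k => A k.+1 *m Z ^+ k.+2) (phi Z).
Proof.
have H := mx_series_cvg_behead (mx_series_cvg_behead series_AZ_cvg).
by rewrite /phi (mx_series_sumE H).
Qed.

Lemma phi_split : phi Z = A 1 *m Z ^+ 2 + psi Z.
Proof.
have H := mx_series_cvg_behead phi_cvg.
by rewrite /psi (mx_series_sumE H) addrC subrK.
Qed.

Lemma psi_cvg : mx_series_cvg (fun k => A k.+2 *m Z ^+ k.+3) (psi Z).
Proof.
have H := mx_series_cvg_behead phi_cvg.
by rewrite /psi (mx_series_sumE H).
Qed.

Lemma series_AZ : mx_series_cvg (fun k => Ax k *m Z ^+ k) (Am1 + (A 0 *m Z + phi Z)).
Proof.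
have := mx_series_cvg_cons (F := fun k => Ax k *m Z ^+ k)
  (mx_series_cvg_cons (F := fun k => Ax k.+1 *m Z ^+ k.+1) phi_cvg).
by rewrite /= expr0 mulmx1 expr1.
Qed.

Lemma phi_ge0 : mxle 0 (phi Z).
Proof.
apply: mx_series_ge0 phi_cvg => k.
by apply: mulmx_ge0; [apply: (A_ge0 k.+2) | apply: exprmx_ge0; case: Z_sub].
Qed.

End SubstochasticArgument.

Section Monotonicity.
Context {Z Z' : 'M[R]_n}.
Hypotheses (Z_ge0 : mxle 0 Z) (ZZ' : mxle Z Z') (Z'_sub : substochastic Z').

Lemma le_phi : mxle (phi Z) (phi Z').
Proof.
have Z_sub := substochastic_le Z_ge0 ZZ' Z'_sub.
apply: (mxle_series _ (phi_cvg Z_sub) (phi_cvg Z'_sub)) => k.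
by apply: mxle_wpM2l; [apply: (A_ge0 k.+2) | apply: mxle_exprn].
Qed.

Lemma le_psi : mxle (psi Z) (psi Z').
Proof.
have Z_sub := substochastic_le Z_ge0 ZZ' Z'_sub.
apply: (mxle_series _ (psi_cvg Z_sub) (psi_cvg Z'_sub)) => k.
by apply: mxle_wpM2l; [apply: (A_ge0 k.+3) | apply: mxle_exprn].
Qed.

End Monotonicity.

Lemma phi_lim {Zs : nat -> 'M[R]_n} {Z L} : (forall k, mxle 0 (Zs k)) ->
  (forall k, mxle (Zs k) Z) -> substochastic Z -> mxcvg Zs Z ->
  mxcvg (fun k => phi (Zs k)) L -> phi Z = L.
Proof.
move=> Zs0 ZsZ Z_sub ZsZ_cvg phiL; apply/matrixP => i j; apply/eqP; rewrite eq_le.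
apply/andP; split; last first.
  apply: (ler_cvg_to (phiL i j) (cvg_cst (phi Z i j))); apply: nearW => k.
  exact: le_phi (Zs0 k) (ZsZ k) Z_sub i j.
have Zs_sub k := substochastic_le (Zs0 k) (ZsZ k) Z_sub.
apply: (ler_cvg_to (phi_cvg Z_sub i j) (cvg_cst (L i j))); apply: nearW => N.
have partial_cvg : (fun k => series (fun m => (A m.+1 *m Zs k ^+ m.+2) i j) N) @ \oo -->
    series (fun m => (A m.+1 *m Z ^+ m.+2) i j) N.
  by apply: cvg_sum => m; apply: (mxcvgM (mxcvg_cst _) (mxcvgX m.+2 ZsZ_cvg)).
apply: (ler_cvg_to partial_cvg (phiL i j)); apply: nearW => k.
apply: (series_le_sums _ (phi_cvg (Zs_sub k) i j)) => m.
move/mxle0P: (mulmx_ge0 (A_ge0 m.+2) (exprmx_ge0 m.+2 (Zs0 k))); apply.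
Qed.

Lemma unitmx_IA0 : (1%:M - A 0) \in unitmx.
Proof. exact: (unitmx_1B A_irr A_sto (A_ge0 1) A0_le_sum A0_neq_sum). Qed.

Lemma invIA0_ge0 (W : 'M[R]_n) : mxle 0 W -> mxle 0 (invIA0 A *m W).
Proof. exact: (invmx_1B_ge0 A_irr A_sto (A_ge0 1) A0_le_sum A0_neq_sum). Qed.

Lemma invIA0K (W : 'M[R]_n) : invIA0 A *m ((1%:M - A 0) *m W) = W.
Proof. by rewrite mulmxA mulVmx ?mul1mx // unitmx_IA0. Qed.

Lemma IA0_invK (W : 'M[R]_n) : (1%:M - A 0) *m (invIA0 A *m W) = W.
Proof. by rewrite mulmxA mulmxV ?mul1mx // unitmx_IA0. Qed.

Section Iteration.
Context {omega : nat -> R}.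
Hypothesis omega_eligible : eligible Am1 A omega.

Local Notation X := (Xseq Am1 A omega).
Local Notation Y := (Yseq Am1 A omega).

Lemma Xseq_succ k : X k.+1 = Y k + omega k.+1 *: (invIA0 A *m (A 1 *m (Y k ^+ 2 - X k ^+ 2))).
Proof. by rewrite mulmxA. Qed.

Lemma Yseq_le_Xseq_succ {k} : mxle 0 (X k) -> mxle (X k) (Y k) -> mxle (Y k) (X k.+1).
Proof.
move=> X0 XY; apply/mxsubr_ge0; rewrite Xseq_succ addrC addKr.
apply: mxscale_ge0; first exact: omega_eligible.1.
apply: invIA0_ge0; apply: mulmx_ge0; first exact: (A_ge0 2).
by apply/mxsubr_ge0; apply: mxle_exprn.
Qed.

(* (I - A_0) (Y_(k+1) - X_(k+1)) = A_1 (X_(k+1)^2 - X_k^2) + psi X_(k+1) - psi X_k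
   - omega_(k+1) A_1 (Y_k^2 - X_k^2), which eligibility and psi Y_k <= psi X_(k+1)
   make nonnegative. *)
Lemma Xseq_le_Yseq_succ {k} : substochastic (X k) -> mxle (X k) (Y k) ->
  mxle (X k.+1) (Y k.+1).
Proof.
move=> sX XY; have [elig_le [_ rowsum_le]] := omega_eligible.2 k.
have YX' := Yseq_le_Xseq_succ sX.1 XY.
have Y0 := mxle_trans sX.1 XY.
have sX' : substochastic (X k.+1) by split; first exact: mxle_trans YX'.
have sY := substochastic_le Y0 YX' sX'.
have IA0X' : (1%:M - A 0) *m X k.+1 =
    Am1 + phi (X k) + omega k.+1 *: (A 1 *m (Y k ^+ 2 - X k ^+ 2)).
  by rewrite Xseq_succ mulmxDr -scalemxAr !IA0_invK.
have psi_diff : mx_series_sum (fun m => A m.+2 *m (Y k ^+ m.+3 - X k ^+ m.+3)) =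
    psi (Y k) - psi (X k).
  apply: mx_series_sumE.
  by apply: eq_mx_series_cvg (mx_series_cvgB (psi_cvg sY) (psi_cvg sX)) => m; rewrite mulmxBr.
rewrite psi_diff [A 1 *m (X k.+1 ^+ 2 - _)]mulmxBr in elig_le.
apply/mxsubr_ge0; rewrite -[Y k.+1 - _]invIA0K mulmxBr IA0_invK.
apply: invIA0_ge0; rewrite IA0X' -/(phi _) (phi_split sX) (phi_split sX').
have regroup (M a b a0 b0 W : 'M[R]_n) :
    M + (a + b) - (M + (a0 + b0) + W) = a - a0 + (b - b0) - W.
  by apply/matrixP => i j; rewrite !mxE; ring.
rewrite regroup; apply/mxsubr_ge0; apply: mxle_trans elig_le _.
by apply: mxleD (mxlexx _) (mxleD (le_psi Y0 YX' sX') (mxlexx _)).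
Qed.

Lemma Xseq_invariant k : substochastic (X k) /\ mxle (X k) (Y k).
Proof.
elim: k => [|k [sX XY]].
  split; first exact: substochastic0.
  apply: invIA0_ge0; rewrite -[0](addr0 0).
  exact: mxleD (A_ge0 0) (phi_ge0 substochastic0).
split; last exact: Xseq_le_Yseq_succ sX XY.
have YX' := Yseq_le_Xseq_succ sX.1 XY.
by split; [exact: mxle_trans (mxle_trans sX.1 XY) YX' | case: (omega_eligible.2 k) => _ []].
Qed.

Lemma Xseq_nondecreasing k : mxle (X k) (X k.+1).
Proof.
have [[X0 _] XY] := Xseq_invariant k.
exact: mxle_trans XY (Yseq_le_Xseq_succ X0 XY).
Qed.

Definition Xlim : 'M[R]_n := \matrix_(i, j) limn (fun k => X k i j).

Lemma Xseq_entry_cvgn i j : cvgn (fun k => X k i j).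
Proof.
apply: nondecreasing_is_cvgn; first by apply/nondecreasing_seqP => k; apply: Xseq_nondecreasing.
exists 1 => _ [k _ <-].
by have := substochastic_le1 (Xseq_invariant k).1 i j; rewrite mxE.
Qed.

Lemma Xseq_cvg : mxcvg X Xlim.
Proof. by move=> i j; rewrite mxE; apply: Xseq_entry_cvgn. Qed.

Lemma Xseq_le_lim k : mxle (X k) Xlim.
Proof.
move=> i j; rewrite [Xlim i j]mxE; apply: nondecreasing_cvgn_le (Xseq_entry_cvgn i j) k.
by apply/nondecreasing_seqP => l; apply: Xseq_nondecreasing.
Qed.

Lemma Yseq_cvg : mxcvg Y Xlim.
Proof.
move=> i j; apply: (squeeze_cvgr (f := fun k => X k i j) (h := fun k => X k.+1 i j)).
- apply: nearW => k; have [[X0 _] XY] := Xseq_invariant k.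
  by apply/andP; split; [exact: XY | exact: Yseq_le_Xseq_succ X0 XY i j].
- exact: Xseq_cvg.
- by have := Xseq_cvg i j; rewrite -(cvg_shiftS (fun k => X k i j)).
Qed.

Lemma Xlim_substochastic : substochastic Xlim.
Proof.
split; first exact: mxle_trans (Xseq_invariant 0).1.1 (Xseq_le_lim 0).
move=> i j; rewrite (ord1 j) [ones n i 0]mxE.
apply: (ler_cvg_to (mxcvgM Xseq_cvg (mxcvg_cst (ones n)) i 0) (cvg_cst (1 : R))).
by apply: nearW => k; have := (Xseq_invariant k).1.2 i 0; rewrite [ones n i 0]mxE.
Qed.

(* phi (X k) = (I - A_0) Y_k - A_{-1}, and Y_k has the same limit as X_k. *)
Lemma phi_Xlim : phi Xlim = (1%:M - A 0) *m Xlim - Am1.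
Proof.
apply: (phi_lim (fun k => (Xseq_invariant k).1.1) Xseq_le_lim Xlim_substochastic Xseq_cvg).
have -> : (fun k => phi (X k)) = (fun k => (1%:M - A 0) *m Y k + - Am1).
  by apply/funext => k; rewrite /Yseq /Ystep IA0_invK addrC addKr.
exact: mxcvgD (mxcvgM (mxcvg_cst _) Yseq_cvg) (mxcvgN (mxcvg_cst _)).
Qed.

Lemma Xlim_solution : mx_series_cvg (fun k => Ax k *m Xlim ^+ k) Xlim.
Proof.
have := series_AZ Xlim_substochastic; rewrite phi_Xlim mulmxBl mul1mx.
have -> // : Am1 + (A 0 *m Xlim + (Xlim - A 0 *m Xlim - Am1)) = Xlim.
by apply/matrixP => i j; rewrite !mxE; ring.
Qed.

Lemma Xlim_eq_minimal_solution {c : 'cV[R]_n} {G : 'M[R]_n} :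
  mxle 0 c -> Asum *m c + M1 *m e = c + eta *: e ->
  mxle 0 G -> mx_series_cvg (fun k => Ax k *m G ^+ k) G ->
  (forall Z, mxle 0 Z -> mx_series_cvg (fun k => Ax k *m Z ^+ k) Z -> mxle G Z) ->
  Xlim = G.
Proof.
move=> c_ge0 c_poisson G_ge0 G_sol G_min.
apply/esym/mxle_rowsum_eq; first exact: G_min _ Xlim_substochastic.1 Xlim_solution.
move=> i; apply: le_trans (Xlim_substochastic.2 i 0) _.
by rewrite mxE; exact: rowsum_G_ge1 c_ge0 c_poisson G_ge0 G_sol i.
Qed.

End Iteration.
End Drift.

Theorem proposition3 (R : realType) (n : nat)
  (Am1 : 'M[R]_n) (A : nat -> 'M[R]_n)          (* Am1 = A_{-1}, A i = A_i for i >= 0 *)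
  (Asum : 'M[R]_n) (M1 : 'M[R]_n) (v : 'rV[R]_n) (G : 'M[R]_n)
  (omega : nat -> R) :
  (forall k, mxle 0 (Aext Am1 A k)) ->
  mx_series_cvg (Aext Am1 A) Asum ->
  irreducible_mx Asum -> row_stochastic Asum ->
  mx_series_cvg (fun k => ((k%:Z - 1)%:~R : R) *: Aext Am1 A k) M1 ->
  (forall j, 0 < v 0 j) -> v *m Asum = v -> (v *m ones n) 0 0 = 1 ->
  (v *m (M1 *m ones n)) 0 0 < 0 ->
  mxle 0 G ->
  mx_series_cvg (fun k => Aext Am1 A k *m G ^+ k) G ->
  (forall X : 'M[R]_n, mxle 0 X ->
     mx_series_cvg (fun k => Aext Am1 A k *m X ^+ k) X -> mxle G X) ->
  eligible Am1 A omega ->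
  (forall k, mxle (Xseq Am1 A omega k) (Xseq Am1 A omega k.+1)) /\
  (forall i j, (fun k => Xseq Am1 A omega k i j) @ \oo --> G i j).
Proof.
move=> A_ge0 A_sum A_irr A_sto M1_sum _ vA ve drift_lt0 G_ge0 G_sol G_min elig.
have [c [c_ge0 c_poisson]] := poisson_solution_ge0 A_irr A_sto vA ve (M1 *m ones n).
split=> [k|].
  exact: (Xseq_nondecreasing A_ge0 A_sum M1_sum drift_lt0 A_irr A_sto elig k).
rewrite -(Xlim_eq_minimal_solution A_ge0 A_sum M1_sum drift_lt0 A_irr A_sto elig
  c_ge0 c_poisson G_ge0 G_sol G_min).
exact: (Xseq_cvg A_ge0 A_sum M1_sum drift_lt0 A_irr A_sto elig).
Qed.
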